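(* Let $\overline{t}$ be an element of $\mathbb{T}^I$. Then $\overline{t}$ belongs to $\widehat{H}$ if, and only if, there is a finite set $\{\overline{x}_1,\dots ,\overline{x}_m\}\subseteq \mathbb{Z}^I$ such that if $\overline{g}\in H$ and $\langle\overline{g},\overline{x}_j\rangle=0$ for all $1\leq j\leq m$, then $\langle\overline{g},\overline{t}\rangle=0$.
   Context: Let $I$ be an index set of non-measurable cardinality. Let $H$ denote the group $\mathbb{Z}^{(I)}$ (the direct sum of $I$ copies of $\mathbb{Z}$), identified with $\mathrm{Hom}(\mathbb{Z}^I,\mathbb{Z})$ and equipped with the topology $t_p(\mathbb{Z}^I)$ of pointwise convergence on $\mathbb{Z}^I$ (inherited from $\mathbb{Z}^{\mathbb{Z}^I}$). For $\overline{g}\in H$ and $\overline{x}\in\mathbb{Z}^I$ (or $\overline{x}\in\mathbb{T}^I$) write $\langle\overline{g},\overline{x}\rangle:=\sum_{i\in I}\overline{g}(i)\cdot\overline{x}(i)$ (a finite sum). The circle group $\mathbb{T}$ is identified with the additive group $(-1/2,1/2]$ with addition modulo $\mathbb{Z}$. The dual group $\widehat{H}$ (continuous homomorphisms $H\to\mathbb{T}$) is regarded as a subgroup of $\mathbb{T}^I$ (the dual of $H$ with the discrete topology), an element $\overline{t}\in\mathbb{T}^I$ acting as the character $\overline{g}\mapsto\langle\overline{g},\overline{t}\rangle$. *)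

From mathcomp Require Import all_boot all_order all_algebra.
From mathcomp Require Import finmap.
From mathcomp Require Import reals.
Set Implicit Arguments. Unset Strict Implicit. Unset Printing Implicit Defensive.
Import Order.TTheory GRing.Theory Num.Theory.
Local Open Scope ring_scope.
Local Open Scope fset_scope.

(* I has measurable cardinality iff there is a nonprincipal countably complete
   (sigma-complete) ultrafilter on I (Ulam); "non-measurable" is its negation. *)
Definition countably_complete_nonprincipal_ultrafilter (I : Type)
    (U : (I -> Prop) -> Prop) : Prop :=
  U (fun _ => True) /\
  ~ U (fun _ => False) /\
  (forall A B : I -> Prop, U A -> (forall i, A i -> B i) -> U B) /\
  (forall F : nat -> I -> Prop, (forall n, U (F n)) ->
      U (fun i => forall n, F n i)) /\
  (forall A : I -> Prop, U A \/ U (fun i => ~ A i)) /\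
  (forall i0 : I, ~ U (fun i => i = i0)).

Definition nonmeasurable_card (I : Type) : Prop :=
  ~ exists U, countably_complete_nonprincipal_ultrafilter (I := I) U.

Notation H I := {fsfun I -> int with 0%R}.

Definition pairZ (I : choiceType) (g : H I) (x : I -> int) : int :=
  \sum_(i <- finsupp g) g i * x i.

(* <g, t> for t in T^I, computed in R; its class modulo Z is the value in T. *)
Definition pairR (R : realType) (I : choiceType) (g : H I) (t : I -> R) : R :=
  \sum_(i <- finsupp g) (g i)%:~R * t i.

(* T is identified with (-1/2, 1/2] with addition mod Z. *)
Definition in_T (R : realType) (a : R) : Prop := - (1/2) < a /\ a <= 1/2.

Definition zeroT (R : realType) (a : R) : Prop := exists k : int, a = k%:~R.

(* t in T^I defines a character of H continuous for t_p(Z^I): basic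
   neighbourhoods of g are {h | <h,x_j> = <g,x_j>, j < m} for finitely many
   x_j in Z^I, and the circle carries its usual metric
   d(a,b) = min_k |a - b - k|. *)
Definition in_dual (R : realType) (I : choiceType) (t : I -> R) : Prop :=
  forall (g : H I) (e : R), 0 < e ->
    exists (m : nat) (F : 'I_m -> I -> int),
      forall h : H I, (forall j, pairZ h (F j) = pairZ g (F j)) ->
        exists k : int, `|pairR h t - pairR g t - k%:~R| < e.

From mathcomp Require Import all_boot all_order all_algebra.
From mathcomp Require Import finmap.
From mathcomp Require Import reals.
From mathcomp Require Import lra.
Import Order.TTheory GRing.Theory Num.Theory.
Local Open Scope ring_scope.

(* Forward direction: continuity at 0 with tolerance 1/4 gives x_1, ..., x_m;
   if g annihilates them, so does every multiple n g, hence every n <g,t> lies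
   within 1/4 of an integer, which forces <g,t> to be an integer.  Conversely,
   if h and g agree on the x_j, then h - g annihilates them and
   <h,t> - <g,t> is an integer. *)

Section Pairing.
Variable I : choiceType.
Implicit Types (g h : H I) (a b : int).

(* finmap gives {fsfun I -> int with 0} no zmodType structure, so integer
   combinations are built by hand. *)
Definition fsfun_comb a g b h : H I :=
  [fsfun i in (finsupp g `|` finsupp h)%fset => a * g i + b * h i | 0].

Lemma fsfun_combE a g b h i : fsfun_comb a g b h i = a * g i + b * h i.
Proof.
rewrite /fsfun_comb fsfun_fun in_fsetU; case: ifP => // /norP[gi hi].
by rewrite !fsfun_dflt // !mulr0 addr0.
Qed.

Lemma finsupp_comb a g b h :
  (finsupp (fsfun_comb a g b h) `<=` finsupp g `|` finsupp h)%fset.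
Proof. exact: finsupp_sub. Qed.

Definition pairing {V : pzRingType} g (x : I -> V) : V :=
  \sum_(i <- finsupp g) (g i)%:~R * x i.

Lemma pairZE g (x : I -> int) : pairZ g x = pairing g x.
Proof. by apply: eq_bigr => i _; rewrite intz. Qed.

Lemma pairRE (R : realType) g (t : I -> R) : pairR g t = pairing g t.
Proof. by []. Qed.

Variable V : pzRingType.
Implicit Types x : I -> V.

Lemma pairing_sub (S : {fset I}) g x : (finsupp g `<=` S)%fset ->
  pairing g x = \sum_(i <- S) (g i)%:~R * x i.
Proof.
move=> gS; apply: big_fset_incl => // i _ /fsfun_dflt ->.
by rewrite mul0r.
Qed.

Lemma pairing0 x : pairing [fsfun with 0] x = 0.
Proof. by rewrite /pairing finsupp0 big_nil. Qed.

Lemma pairing_comb a g b h x :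
  pairing (fsfun_comb a g b h) x = a%:~R * pairing g x + b%:~R * pairing h x.
Proof.
set S := (finsupp g `|` finsupp h)%fset.
rewrite (pairing_sub _ _ _ (finsupp_comb a g b h)) (@pairing_sub S g) ?fsubsetUl //.
rewrite (@pairing_sub S h) ?fsubsetUr // !mulr_sumr -big_split /=.
by apply: eq_bigr => i _; rewrite fsfun_combE intrD !intrM mulrDl !mulrA.
Qed.

End Pairing.
Arguments fsfun_comb {I}.

Section NearIntegers.
Variable R : realType.
Implicit Types (y c e : R) (k : int).

Lemma near_int_eq0 y k : `|y| + `|y - k%:~R| < 1 -> k = 0.
Proof.
move=> y_small; have : `|k%:~R : R| < 1.
  apply: le_lt_trans y_small.
  by have := ler_normB y (y - k%:~R); rewrite opprB addrC subrK.
by rewrite -intr_norm ltrz1 -[1]add0r ltzD1 normr_le0 => /eqP.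
Qed.

Lemma mulrn_bounded_eq0 c e : (forall n : nat, `|c *+ n| < e) -> c = 0.
Proof.
move=> bounded; have [//|c_neq0] := eqVneq c 0; exfalso.
have c_gt0 : 0 < `|c| by rewrite normr_gt0.
have e_gt0 : 0 < e by have := bounded 0%N; rewrite mulr0n normr0.
have /archi_boundP := ltW (divr_gt0 e_gt0 c_gt0); set N := Num.bound _ => eN.
rewrite ltr_pdivrMr // mulr_natl -normrMn in eN.
by have := bounded N; rewrite ltNge ltW.
Qed.

Lemma int_of_mulrn_near_int e b : 3 * e <= 1 ->
  (forall n : nat, exists k, `|b *+ n - k%:~R| < e) -> exists k, b = k%:~R.
Proof.
move=> e_small near; have [k1 nearb] := near 1%N; rewrite mulr1n in nearb.
exists k1; apply: subr0_eq; set c := b - k1%:~R.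
apply: (@mulrn_bounded_eq0 c e); elim=> [|n IH].
  by rewrite mulr0n normr0 (le_lt_trans _ nearb).
have [k nearc] : exists k, `|c *+ n.+1 - k%:~R| < e.
  have [k nearbn] := near n.+1; exists (k - k1 *+ n.+1).
  by rewrite /c mulrnBl intrB rmorphMn opprB addrA subrK.
have cn1_small : `|c *+ n.+1| < 2 * e.
  by rewrite mulrSr (le_lt_trans (ler_normD _ _)) //; lra.
have k0 : k = 0 by apply: (near_int_eq0 (c *+ n.+1)); lra.
by move: nearc; rewrite k0 subr0.
Qed.

End NearIntegers.

Theorem lemma4p8 (R : realType) (I : choiceType) (hI : nonmeasurable_card I)
    (t : I -> R) (ht : forall i, in_T (t i)) :
  in_dual t <->
  exists (m : nat) (x : 'I_m -> I -> int),
    forall g : H I, (forall j, pairZ g (x j) = 0) -> zeroT (pairR g t).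
Proof.
split=> [cont | [m [x annih]] g e e_gt0].
- have [m [x near0]] := cont [fsfun with 0] (1/4) ltac:(lra).
  exists m, x => g gx; apply: (@int_of_mulrn_near_int _ (1/4)) => [|n]; first lra.
  have [|k] := near0 (fsfun_comb n g 0 g).
    by move=> j; rewrite !pairZE pairing_comb pairing0 -pairZE gx mulr0 mul0r addr0.
  by rewrite !pairRE pairing_comb pairing0 mul0r addr0 subr0 mulr_natl; exists k.
- exists m, x => h hx.
  have [|k hk] := annih (fsfun_comb 1 h (-1) g).
    by move=> j; rewrite pairZE pairing_comb -!pairZE hx mulN1r mul1r subrr.
  exists k; move: hk; rewrite !pairRE pairing_comb mul1r mulN1r => <-.
  by rewrite subrr normr0.
Qed.
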